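(* There is no deterministic online algorithm with competitive ratio $o(n)$ for the degree-bounded group Steiner tree problem, where $n$ is the number of vertices. That is, for every deterministic online algorithm $\mathcal{A}$ and every function $f$ with $f(n)=o(n)$, there exist an instance on some number $n$ of vertices and a sequence of demand groups such that the maximum degree of $\mathcal{A}$'s final subgraph exceeds $f(n)\cdot\mathrm{OPT}$.
   Context: Online degree-bounded group Steiner tree: an undirected graph $G$ with a root vertex is given in advance; demands are subsets (groups) of vertices arriving one by one, and after each arrival the online algorithm must add edges (never removing any) so that for every group seen so far, at least one vertex of the group is connected to the root. The objective is to minimize the maximum vertex degree of the final subgraph; $\mathrm{OPT}$ is the minimum maximum degree of a subgraph in which every demand group has a vertex connected to the root. The competitive ratio is the worst-case ratio of the algorithm's maximum degree to $\mathrm{OPT}$. *)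

From HB Require Import structures.
From mathcomp Require Import all_boot all_order all_algebra.
From mathcomp Require Import reals.
Set Implicit Arguments. Unset Strict Implicit. Unset Printing Implicit Defensive.
Import Order.TTheory GRing.Theory Num.Theory.

(* Vertices of an n-vertex graph are 'I_n; an (undirected, simple) edge is a
   2-element vertex set; a (sub)graph is a set of edges. *)
Definition edge_set (n : nat) := {set {set 'I_n}}.

Definition simple_graph n (G : edge_set n) : bool := [forall e in G, #|e| == 2].

Definition adj n (H : edge_set n) : rel 'I_n := fun u v => [set u; v] \in H.

Definition deg n (H : edge_set n) (v : 'I_n) : nat := #|[set e in H | v \in e]|.
Definition maxdeg n (H : edge_set n) : nat := \max_(v : 'I_n) deg H v.

Definition feasible n (H : edge_set n) (r : 'I_n) (s : seq {set 'I_n}) : bool :=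
  all (fun g : {set 'I_n} => [exists v in g, connect (adj H) r v]) s.

(* OPT: minimum maximum degree of a feasible subgraph of G (the default value n
   is never attained when a feasible subgraph exists, since degrees are < n). *)
Definition opt n (G : edge_set n) (r : 'I_n) (s : seq {set 'I_n}) : nat :=
  \big[minn/n]_(H : edge_set n | (H \subset G) && feasible H r s) maxdeg H.

(* A deterministic online algorithm: given the graph G and root r (known in
   advance) and the demand groups arrived so far (the last one being the new
   arrival), it returns the set of edges it adds at this step.  Being a
   function of the prefix only, it is automatically online and deterministic. *)
Definition online_alg :=
  forall n : nat, edge_set n -> 'I_n -> seq {set 'I_n} -> edge_set n.

Definition alg_out (A : online_alg) n (G : edge_set n) (r : 'I_n)
  (s : seq {set 'I_n}) : edge_set n :=
  \bigcup_(i < size s) A n G r (take i.+1 s).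

Definition valid_alg (A : online_alg) : Prop :=
  forall n (G : edge_set n) (r : 'I_n) (s : seq {set 'I_n}),
    simple_graph G -> feasible G r s ->
    forall k, k <= size s ->
      (alg_out A G r (take k s) \subset G) && feasible (alg_out A G r (take k s)) r (take k s).

Definition little_o_n (R : realType) (f : nat -> R) : Prop :=
  (forall eps : R, 0 < eps -> exists N : nat, forall n : nat, (N <= n)%N ->
     `|f n| <= eps * n%:R)%R.

From HB Require Import structures.
From mathcomp Require Import all_boot all_order all_algebra.
From mathcomp Require Import reals.
From mathcomp Require Import lra.
Import Order.TTheory GRing.Theory Num.Theory.

(* The adversary plays on a star centred at the root.  Every demand group is
   the set of leaves whose edge the algorithm has not bought yet; to serve it
   the algorithm must buy one more edge at the root, so after n - 1 rounds the
   root has degree n - 1.  The groups are nested, so a leaf of the last group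
   lies in every group and the single edge to it is an offline solution:
   OPT <= 1, while f(n) <= n/2 < n - 1 for large n. *)

HB.instance Definition _ := SemiGroup.isComLaw.Build nat minn minnA minnC.

Section Star.

Context {n : nat} (r : 'I_n).

Definition star : edge_set n := [set [set r; j] | j in [set~ r]].

Lemma set2_injr : injective (fun j : 'I_n => [set r; j]).
Proof.
move=> a b /= eq_ab.
have /set2P [ar|//] : a \in [set r; b] by rewrite -eq_ab set22.
have /set2P [br|//] : b \in [set r; a] by rewrite eq_ab set22.
by rewrite ar br.
Qed.

Lemma mem_star j : ([set r; j] \in star) = (j != r).
Proof. by rewrite (mem_imset _ _ set2_injr) !inE. Qed.

Lemma star_simple : simple_graph star.
Proof.
apply/forallP => e; apply/implyP => /imsetP [j]; rewrite !inE => jr ->.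
by rewrite cards2 (eq_sym r) jr.
Qed.

Lemma star_connect_edge (H : edge_set n) v :
  H \subset star -> connect (adj H) r v -> v != r -> [set r; v] \in H.
Proof.
move=> sub_H /connectP [p]; case/lastP: p => [_ -> /[!eqxx] //|p y].
rewrite rcons_path last_rcons => /andP [_ Hyv] -> {v} yr.
have /imsetP [j _ eq_yj] := subsetP sub_H _ Hyv.
have : y \in [set r; j] by rewrite -eq_yj set22.
by rewrite !inE (negbTE yr) => /eqP ->; rewrite -eq_yj.
Qed.

End Star.

Section Opt.

Context {n : nat} (G : edge_set n) (r : 'I_n) (s : seq {set 'I_n}).

Lemma opt_le_maxdeg (H : edge_set n) :
  H \subset G -> feasible H r s -> opt G r s <= maxdeg H.
Proof.
move=> sub_HG feas_H.
by rewrite /opt (big_rem_AC _ _ _ _ (mem_index_enum H)) sub_HG feas_H geq_minl.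
Qed.

Lemma maxdeg_set1 (e : {set 'I_n}) : maxdeg [set e] <= 1.
Proof.
apply/bigmax_leqP => v _; rewrite -(cards1 e).
by apply/subset_leq_card/subsetP => e'; rewrite inE => /andP [].
Qed.

Lemma feasible_edge j :
  all (fun g : {set 'I_n} => j \in g) s -> feasible [set [set r; j]] r s.
Proof.
move=> j_all; apply/allP => g gs; apply/existsP; exists j.
by rewrite (allP j_all g gs) connect1 // /adj set11.
Qed.

End Opt.

Lemma opt_star_le1 {n} {r j : 'I_n} {s : seq {set 'I_n}} :
  j != r -> all (fun g : {set 'I_n} => j \in g) s -> opt (star r) r s <= 1.
Proof.
move=> jr j_all; apply: leq_trans _ (maxdeg_set1 [set r; j]).
by rewrite opt_le_maxdeg ?feasible_edge // sub1set mem_star.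
Qed.

Lemma alg_out_rcons (A : online_alg) n (G : edge_set n) r s g :
  alg_out A G r (rcons s g) = alg_out A G r s :|: A n G r (rcons s g).
Proof.
rewrite /alg_out size_rcons big_ord_recr /= take_oversize ?size_rcons //.
by congr (_ :|: _); apply: eq_bigr => i _; rewrite -cats1 takel_cat.
Qed.

Section Adversary.

Context (A : online_alg) {n : nat} (r : 'I_n).

Definition bought_leaves s :=
  [set j | (j != r) && ([set r; j] \in alg_out A (star r) r s)].

Definition unbought_leaves s := [set~ r] :\: bought_leaves s.

Lemma card_bought_leaves s :
  #|bought_leaves s| <= maxdeg (alg_out A (star r) r s).
Proof.
apply: leq_trans (leq_bigmax r); rewrite /deg -(card_imset _ (set2_injr r)).
apply/subset_leq_card/subsetP => _ /imsetP [j /[!inE] /andP [_ out_j] ->].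
by rewrite out_j set21.
Qed.

Lemma bought_leaves_rcons s g :
  bought_leaves s \subset bought_leaves (rcons s g).
Proof.
apply/subsetP => j /[!inE] /andP [-> out_j].
by rewrite alg_out_rcons inE out_j.
Qed.

Definition adversary_prefix s := [/\ feasible (star r) r s,
  exists2 j, j != r & all (fun g : {set 'I_n} => j \in g) s &
  all (fun g : {set 'I_n} => unbought_leaves s \subset g) s].

Hypothesis A_valid : valid_alg A.

Lemma alg_covers_last_group {s g} :
  feasible (star r) r (rcons s g) -> r \notin g ->
  exists2 v, v \in g & v \in bought_leaves (rcons s g).
Proof.
move=> feas r_g.
have := A_valid _ _ _ _ (star_simple r) feas _ (leqnn (size (rcons s g))).
rewrite take_size /feasible all_rcons.
move=> /andP [sub /andP [/exists_inP [v gv cv] _]].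
have vr : v != r by apply: contraNneq r_g => <-.
by exists v; rewrite // inE vr star_connect_edge.
Qed.

Lemma adversary_step {s} :
  adversary_prefix s -> unbought_leaves s != set0 ->
  let s' := rcons s (unbought_leaves s) in
  adversary_prefix s' /\ #|bought_leaves s| < #|bought_leaves s'|.
Proof.
move=> [feas _ U_all] /set0Pn [u Uu] s'.
have ur : u != r by move: Uu; rewrite !inE => /andP [_].
have feas' : feasible (star r) r s'.
  rewrite /s' /feasible all_rcons -/(feasible _ r s) feas andbT.
  by apply/exists_inP; exists u; rewrite // connect1 // /adj mem_star.
have U_sub : unbought_leaves s' \subset unbought_leaves s.
  by apply: setDS; apply: bought_leaves_rcons.
have r_U : r \notin unbought_leaves s by rewrite !inE eqxx andbF.
have [v Uv cv] := alg_covers_last_group feas' r_U.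
split.
- split=> //; first exists u => //.
    rewrite all_rcons Uu; apply/allP => g gs.
    exact: subsetP (allP U_all g gs) u Uu.
  rewrite all_rcons U_sub; apply/allP => g gs.
  exact: subset_trans U_sub (allP U_all g gs).
- apply/proper_card/properP; split; first exact: bought_leaves_rcons.
  by exists v => //; move: Uv; rewrite inE => /andP [].
Qed.

Lemma adversary_run t : 1 < n -> t <= n.-1 ->
  exists s, adversary_prefix s /\ t <= #|bought_leaves s|.
Proof.
move=> n_gt1; elim: t => [_|t IH lt_tn].
  have /card_gt0P [j] : 0 < #|[set~ r]|.
    by rewrite cardsC1 card_ord -ltnS prednK ?(ltnW n_gt1).
  by rewrite !inE => jr; exists [::]; split => //; split => //; exists j.
have [s [pre_s le_t]] := IH (ltnW lt_tn).
have [U0|U_ne0] := eqVneq (unbought_leaves s) set0.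
  exists s; split => //; apply: leq_trans lt_tn _.
  rewrite -[n in n.-1]card_ord -(cardsC1 r) subset_leq_card //.
  by rewrite -setD_eq0 -/(unbought_leaves s) U0.
have [pre_s' gain] := adversary_step pre_s U_ne0.
by exists (rcons s (unbought_leaves s)); split => //; apply: leq_ltn_trans gain.
Qed.

End Adversary.

Lemma mulr_nat_le_norm {R : realDomainType} (x : R) {k} :
  k <= 1 -> (x * k%:R <= `|x|)%R.
Proof.
by case: k => [|[|]] // _; rewrite ?mulr0 ?mulr1 ?normr_ge0 ?ler_norm.
Qed.

Lemma half_lt_pred (R : realFieldType) n :
  2 < n -> (1/2 * n%:R < n.-1%:R :> R)%R.
Proof.
case: n => // n; rewrite ltnS -(ler_nat R) => n_ge2 /=.
by rewrite -[(n.+1)%:R%R]natr1; lra.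
Qed.

Theorem theorem4 (R : realType) (A : online_alg) (f : nat -> R) :
  valid_alg A -> little_o_n f ->
  exists (n : nat) (G : edge_set n) (r : 'I_n) (s : seq {set 'I_n}),
    [/\ simple_graph G, feasible G r s &
        (f n * (opt G r s)%:R < (maxdeg (alg_out A G r s))%:R)%R].
Proof.
move=> A_valid f_small.
have [N f_le] := f_small (1/2)%R ltac:(lra).
pose r := @ord0 N.+2.
have [s [[feas [j jr j_all] _] covered]] :=
  @adversary_run A _ r A_valid N.+2 isT (leqnn N.+2).
exists N.+3, (star r), r, s; split; [exact: star_simple | exact: feas |].
have deg_ge : (N.+2%:R <= (maxdeg (alg_out A (star r) r s))%:R :> R)%R.
  by rewrite ler_nat (leq_trans covered (card_bought_leaves _ _ _)).
apply: le_lt_trans (mulr_nat_le_norm _ (opt_star_le1 jr j_all)) _.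
apply: le_lt_trans (f_le N.+3 (leqW (leqW (leqnSn N)))) _.
exact: lt_le_trans (half_lt_pred R N.+3 isT) deg_ge.
Qed.
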